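(* Let $d\in\mathbb{R}^m$ with $d>0$, let $\ell$ be a certified lower bound for $A^\top x\le u$ with certificate matrix $\Lambda$, and suppose $f(d,\ell)=1$. Let $i\in\{1,\dots,m\}$, set $L_i:=a_i^\top y(d,\ell)-\gamma_i(d,\ell)$, and define $$\hat\lambda_i:=\gamma_i(d,\ell)\,D\,t(d,\ell)-DA^\top B(d)^{-1}a_i,\qquad \tilde\lambda_i:=\Lambda\hat\lambda_i^-+\hat\lambda_i^+ .$$ Then $A\tilde\lambda_i=-a_i$, $\tilde\lambda_i\ge 0$ and $-\tilde\lambda_i^\top u\ge L_i$; i.e., $L_i$ is a certified lower bound on constraint $i$ with certificate $\tilde\lambda_i$.
   Context: Standing assumption: $A=[a_1|\cdots|a_m]\in\mathbb{R}^{n\times m}$ has columns of unit Euclidean norm and $\{A\lambda:\lambda\ge0\}=\mathbb{R}^n$; $u\in\mathbb{R}^m$. For $d\in\mathbb{R}^m$, $D=\mathrm{diag}(d)$. For $d>0$, $\ell\in\mathbb{R}^m$: $r(\ell)=\tfrac12(u+\ell)$, $v(\ell)=\tfrac12(u-\ell)$, $B(d)=ADA^\top$, $y(d,\ell)=B(d)^{-1}ADr(\ell)$, $t(d,\ell)=A^\top y(d,\ell)-r(\ell)$, $f(d,\ell)=v(\ell)^\top Dv(\ell)-t(d,\ell)^\top Dt(d,\ell)$, and when $f(d,\ell)>0$, $\gamma_i(d,\ell)=\sqrt{f(d,\ell)\,a_i^\top B(d)^{-1}a_i}$. A scalar $\ell_i$ is a certified lower bound on constraint $i$ with certificate $\lambda_i\in\mathbb{R}^m$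 if $A\lambda_i=-a_i$, $\lambda_i\ge0$, $-\lambda_i^\top u\ge\ell_i$. A vector $\ell$ is a certified lower bound with certificate matrix $\Lambda\in\mathbb{R}^{m\times m}$ if $A\Lambda=-A$, $\Lambda\ge0$ entrywise, $-\Lambda^\top u\ge\ell$. For a vector $w$, $w^+,w^-\ge0$ are its componentwise positive and negative parts, $w=w^+-w^-$. *)

From HB Require Import structures.
From mathcomp Require Import all_boot all_order all_algebra.
Set Implicit Arguments. Unset Strict Implicit. Unset Printing Implicit Defensive.
Import Order.TTheory GRing.Theory Num.Theory.
Local Open Scope ring_scope.

Section Defs.
Variables (R : rcfType) (n m : nat).
Implicit Types (A : 'M[R]_(n, m)) (u d l : 'cV[R]_m).

Definition unit_columns A : Prop := forall j : 'I_m, \sum_(k < n) A k j ^+ 2 = 1.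

Definition positively_spanning A : Prop :=
  forall x : 'cV[R]_n, exists lam : 'cV[R]_m, (forall j, 0 <= lam j 0) /\ A *m lam = x.

Definition Dmx d : 'M[R]_m := diag_mx d^T.
Definition rvec u l : 'cV[R]_m := 2^-1 *: (u + l).
Definition vvec u l : 'cV[R]_m := 2^-1 *: (u - l).
Definition Bmx A d : 'M[R]_n := A *m Dmx d *m A^T.
Definition yvec A u d l : 'cV[R]_n := invmx (Bmx A d) *m A *m Dmx d *m rvec u l.
Definition tvec A u d l : 'cV[R]_m := A^T *m yvec A u d l - rvec u l.
Definition fval A u d l : R :=
  ((vvec u l)^T *m Dmx d *m vvec u l) 0 0 - ((tvec A u d l)^T *m Dmx d *m tvec A u d l) 0 0.
Definition quad_i A d (i : 'I_m) : R := ((col i A)^T *m invmx (Bmx A d) *m col i A) 0 0.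
Definition gamma A u d l (i : 'I_m) : R := Num.sqrt (fval A u d l * quad_i A d i).

Definition pospart (w : 'cV[R]_m) : 'cV[R]_m := map_mx (fun x => Num.max x 0) w.
Definition negpart (w : 'cV[R]_m) : 'cV[R]_m := map_mx (fun x => Num.max (- x) 0) w.

Definition certified_lb A u l (Lam : 'M[R]_m) : Prop :=
  [/\ A *m Lam = - A, (forall j k, 0 <= Lam j k) &
      forall j, l j 0 <= (- (Lam^T *m u)) j 0].

Definition certified_lb_i A u (i : 'I_m) (Li : R) (lam : 'cV[R]_m) : Prop :=
  [/\ A *m lam = - col i A, (forall j, 0 <= lam j 0) &
      Li <= - ((lam^T *m u) 0 0)].
End Defs.

From mathcomp Require Import all_boot all_order all_algebra.
From mathcomp Require Import lra ring.
Import Order.TTheory GRing.Theory Num.Theory.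
Set Implicit Arguments. Unset Strict Implicit. Unset Printing Implicit Defensive.
Local Open Scope ring_scope.

(* Write <x, z> for x^T D z and c := A^T B^-1 a_i.  Since A D t = 0, the
   vector lhat = D w, w := gamma t - c, satisfies A lhat = -a_i, and any such lhat
   gives the certificate Lam lhat^- + lhat^+ with the bound
   -sum_k (lhat^+_k u_k - lhat^-_k l_k).  With u = r + v and l = r - v the
   k-th summand is lhat_k r_k + |lhat_k| v_k, and AM-GM with weight gamma
   bounds 2 gamma |lhat_k| v_k by d_k (w_k^2 + gamma^2 v_k^2).  Since t and c
   are D-orthogonal, gamma^2 = <c, c> and <v, v> = 1 + <t, t> (that is,
   f = 1), all <t, t> terms cancel after summation, leaving a_i^T y - gamma. *)

Lemma maxr0_sub_maxNr0 (R : realDomainType) (x : R) :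
  Num.max x 0 - Num.max (- x) 0 = x.
Proof. by rewrite !maxEle; case: ifP => ?; case: ifP => ?; lra. Qed.

Lemma maxr0_split (R : realDomainType) (x r v : R) :
  Num.max x 0 * (r + v) - Num.max (- x) 0 * (r - v) = x * r + `|x| * v.
Proof.
have [x0|x0] := lerP 0 x; [rewrite ger0_norm | rewrite ltr0_norm] => //.
all: by rewrite !maxEle; case: ifP => ?; lra.
Qed.

Lemma two_mul_norm_le_sqr (R : realDomainType) (G e w v : R) : 0 <= e ->
  2 * G * (`|e * w| * v) <= e * w ^+ 2 + G ^+ 2 * (e * v ^+ 2).
Proof.
move=> e0; rewrite normrM (ger0_norm e0) -(real_normK (num_real w)).
have := mulr_ge0 e0 (sqr_ge0 (`|w| - G * v)); nra.
Qed.

Lemma psum_mul_sqr_eq0 (R : realDomainType) p (e x : 'cV[R]_p) :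
  (forall j, 0 < e j 0) -> \sum_j e j 0 * x j 0 ^+ 2 = 0 -> x = 0.
Proof.
move=> e_gt0 /psumr_eq0P sum0; apply/matrixP => j k; rewrite (ord1 k) mxE.
have /eqP := sum0 (fun j _ => mulr_ge0 (ltW (e_gt0 j)) (sqr_ge0 _)) j isT.
by rewrite mulf_eq0 (gt_eqF (e_gt0 j)) sqrf_eq0 => /eqP.
Qed.

Lemma tr_mulmx_colE (R : pzSemiRingType) p (x y : 'cV[R]_p) :
  (x^T *m y) 0 0 = \sum_k x k 0 * y k 0.
Proof. by rewrite mxE; apply: eq_bigr => k _; rewrite mxE. Qed.

Section PositiveNegativeParts.
Variables (R : rcfType) (m : nat).
Implicit Type w : 'cV[R]_m.

Lemma pospart_ge0 w j : 0 <= pospart w j 0.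
Proof. by rewrite mxE le_max lexx orbT. Qed.

Lemma negpart_ge0 w j : 0 <= negpart w j 0.
Proof. by rewrite mxE le_max lexx orbT. Qed.

Lemma pospart_sub_negpart w : pospart w - negpart w = w.
Proof. by apply/matrixP => j k; rewrite !mxE maxr0_sub_maxNr0. Qed.

End PositiveNegativeParts.

Section Certificates.
Variables (R : rcfType) (n m : nat) (A : 'M[R]_(n, m)) (u l : 'cV[R]_m).
Variables (Lam : 'M[R]_m) (i : 'I_m).

Lemma certified_lb_i_le (L L' : R) lam :
  certified_lb_i A u i L lam -> L' <= L -> certified_lb_i A u i L' lam.
Proof. by case=> ? ? ? L'L; split=> //; apply: le_trans L'L _. Qed.

Lemma certified_lb_combine (lhat : 'cV[R]_m) :
  certified_lb A u l Lam -> A *m lhat = - col i A ->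
  certified_lb_i A u i
    (- \sum_k (pospart lhat k 0 * u k 0 - negpart lhat k 0 * l k 0))
    (Lam *m negpart lhat + pospart lhat).
Proof.
case=> ALam Lam_ge0 l_le Alhat; split.
- by rewrite mulmxDr mulmxA ALam mulNmx addrC -mulmxBr pospart_sub_negpart.
- move=> j; rewrite mxE addr_ge0 ?pospart_ge0 // mxE.
  by apply: sumr_ge0 => k _; rewrite mulr_ge0 ?negpart_ge0.
rewrite lerN2 linearD /= trmx_mul mulmxDl -mulmxA mxE !tr_mulmx_colE.
rewrite addrC -big_split /=; apply: ler_sum => k _; rewrite lerD2l.
have := l_le k; rewrite mxE lerNr => Lu_le.
by rewrite -mulrN ler_wpM2l ?negpart_ge0.
Qed.

End Certificates.

Lemma positively_spanning_rV_eq0 (R : rcfType) n m (A : 'M[R]_(n, m)) (x : 'rV_n) :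
  positively_spanning A -> x *m A = 0 -> x = 0.
Proof.
move=> spanA xA0; have [lam [_ Alam]] := spanA x^T.
have xx0 : (x *m x^T) 0 0 = 0 by rewrite -Alam mulmxA xA0 mul0mx mxE.
apply: trmx_inj; rewrite trmx0; apply: (psum_mul_sqr_eq0 (e := const_mx 1)).
  by move=> j; rewrite mxE ltr01.
by rewrite -[RHS]xx0 mxE; apply: eq_bigr => j _; rewrite !mxE mul1r expr2.
Qed.

Section DiagonalForm.
Variables (R : rcfType) (n m : nat) (A : 'M[R]_(n, m)) (d : 'cV[R]_m).
Local Notation D := (Dmx d).
Local Notation B := (Bmx A d).

Lemma mul_Dmx (x : 'cV[R]_m) j : (D *m x) j 0 = d j 0 * x j 0.
Proof. by rewrite /Dmx mul_diag_mx !mxE. Qed.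

Lemma tr_Dmx : D^T = D.
Proof. by rewrite /Dmx tr_diag_mx. Qed.

Lemma tr_Bmx : B^T = B.
Proof. by rewrite /Bmx !trmx_mul trmxK tr_Dmx mulmxA. Qed.

Lemma dformE (x y : 'cV[R]_m) :
  (x^T *m D *m y) 0 0 = \sum_j d j 0 * x j 0 * y j 0.
Proof.
rewrite -mulmxA tr_mulmx_colE; apply: eq_bigr => j _.
by rewrite mul_Dmx mulrCA mulrA.
Qed.

Lemma dformC (x y : 'cV[R]_m) : (x^T *m D *m y) 0 0 = (y^T *m D *m x) 0 0.
Proof. by rewrite !dformE; apply: eq_bigr => j _; ring. Qed.

Lemma dformZBl (G : R) (x y z : 'cV[R]_m) :
  ((G *: x - y)^T *m D *m z) 0 0 =
  G * (x^T *m D *m z) 0 0 - (y^T *m D *m z) 0 0.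
Proof.
rewrite !dformE mulr_sumr -sumrB.
by apply: eq_bigr => j _; rewrite !mxE; ring.
Qed.

Lemma dformZBr (G : R) (x y z : 'cV[R]_m) :
  (x^T *m D *m (G *: y - z)) 0 0 =
  G * (x^T *m D *m y) 0 0 - (x^T *m D *m z) 0 0.
Proof. by rewrite dformC dformZBl !(dformC x). Qed.

Lemma Bmx_dform (x : 'cV[R]_n) :
  x^T *m B *m x = (A^T *m x)^T *m D *m (A^T *m x).
Proof. by rewrite /Bmx trmx_mul trmxK !mulmxA. Qed.

Hypothesis d_gt0 : forall j, 0 < d j 0.

Lemma dformxx_ge0 (x : 'cV[R]_m) : 0 <= (x^T *m D *m x) 0 0.
Proof.
rewrite dformE; apply: sumr_ge0 => j _.
by rewrite -mulrA -expr2 mulr_ge0 ?sqr_ge0 ?(ltW (d_gt0 j)).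
Qed.

Lemma dformxx_eq0 (x : 'cV[R]_m) : (x^T *m D *m x) 0 0 = 0 -> x = 0.
Proof.
rewrite dformE => x0; apply: (psum_mul_sqr_eq0 d_gt0).
by rewrite -[RHS]x0; apply: eq_bigr => j _; rewrite -mulrA expr2.
Qed.

Lemma Bmx_unitmx : positively_spanning A -> B \in unitmx.
Proof.
move=> spanA; rewrite unitmxE unitfE; apply/negP => /det0P [x x_neq0 xB0].
have ATx0 : A^T *m x^T = 0.
  by apply: dformxx_eq0; rewrite -Bmx_dform trmxK xB0 mul0mx mxE.
case/eqP: x_neq0; apply: positively_spanning_rV_eq0 spanA _.
by rewrite -[x *m A]trmxK trmx_mul ATx0 trmx0.
Qed.

End DiagonalForm.

Section WeightedProjection.
Variables (R : rcfType) (n m : nat) (A : 'M[R]_(n, m)) (u d l : 'cV[R]_m).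
Variable i : 'I_m.
Hypothesis B_unit : Bmx A d \in unitmx.
Local Notation D := (Dmx d).
Local Notation B := (Bmx A d).
Local Notation a := (col i A).
Local Notation r := (rvec u l).
Local Notation y := (yvec A u d l).
Local Notation t := (tvec A u d l).
Local Notation c := (A^T *m invmx B *m a).
Local Notation "<< x , z >>" := ((x^T *m D *m z) 0 0).

Lemma mulmx_ADt : A *m D *m t = 0.
Proof.
rewrite /tvec mulmxBr /yvec !mulmxA.
by rewrite -[A *m D *m A^T]/B mulmxV // mul1mx subrr.
Qed.

Lemma mulmx_ADc : A *m D *m c = a.
Proof. by rewrite !mulmxA -[A *m D *m A^T]/B mulmxV // mul1mx. Qed.

Lemma mulmx_A_lhat (G : R) : A *m (D *m (G *: t - c)) = - a.
Proof.
by rewrite mulmxA mulmxBr -scalemxAr mulmx_ADt scaler0 sub0r mulmx_ADc.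
Qed.

Lemma mulmx_tD_AT : t^T *m D *m A^T = 0.
Proof. by rewrite -[D]tr_Dmx -!trmx_mul mulmxA mulmx_ADt trmx0. Qed.

Lemma dform_t_r : << t, r >> = - << t, t >>.
Proof.
have -> : r = A^T *m y - t by rewrite /tvec opprB addrC subrK.
by rewrite mulmxBr mulmxA mulmx_tD_AT mul0mx sub0r [in LHS]mxE.
Qed.

Lemma dform_t_c : << t, c >> = 0.
Proof. by rewrite !mulmxA mulmx_tD_AT !mul0mx mxE. Qed.

Lemma trmx_c : c^T = a^T *m invmx B *m A.
Proof. by rewrite !trmx_mul trmxK trmx_inv tr_Bmx mulmxA. Qed.

Lemma dform_c_r : << c, r >> = (a^T *m y) 0 0.
Proof. by rewrite trmx_c /yvec !mulmxA. Qed.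

Lemma dform_c_c : << c, c >> = quad_i A d i.
Proof.
have -> : c^T *m D *m c = a^T *m invmx B *m (A *m D *m c).
  by rewrite trmx_c !mulmxA.
by rewrite mulmx_ADc.
Qed.

Hypothesis d_gt0 : forall j, 0 < d j 0.

Lemma quad_i_gt0 : unit_columns A -> 0 < quad_i A d i.
Proof.
move=> unitA; rewrite -dform_c_c lt_def dformxx_ge0 // andbT.
apply/eqP => /(dformxx_eq0 d_gt0) c0.
have := unitA i; rewrite big1 => [/eqP|k _]; first by rewrite eq_sym oner_eq0.
have := mulmx_ADc; rewrite c0 mulmx0 => /matrixP/(_ k 0).
by rewrite !mxE => <-; rewrite expr2 mulr0.
Qed.

Local Notation v := (vvec u l).

Lemma sum_posneg_Dmx_le (G : R) (w : 'cV[R]_m) :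
  2 * G * \sum_k (pospart (D *m w) k 0 * u k 0 - negpart (D *m w) k 0 * l k 0)
  <= 2 * G * << w, r >> + << w, w >> + G ^+ 2 * << v, v >>.
Proof.
rewrite !dformE !mulr_sumr -!big_split; apply: ler_sum => k _ /=.
have -> : u k 0 = r k 0 + v k 0 by rewrite !mxE; lra.
have -> : l k 0 = r k 0 - v k 0 by rewrite !mxE; lra.
rewrite [pospart _ _ _]mxE [negpart _ _ _]mxE mul_Dmx maxr0_split.
have := two_mul_norm_le_sqr G (w k 0) (v k 0) (ltW (d_gt0 k)).
rewrite !expr2; lra.
Qed.

Local Notation G := (gamma A u d l i).

Lemma sum_posneg_lhat_le : unit_columns A -> fval A u d l = 1 ->
  \sum_k (pospart (D *m (G *: t - c)) k 0 * u k 0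
           - negpart (D *m (G *: t - c)) k 0 * l k 0)
  <= G - (a^T *m y) 0 0.
Proof.
move=> unitA f1; have q_gt0 := quad_i_gt0 unitA.
have G_gt0 : 0 < G by rewrite /gamma f1 mul1r sqrtr_gt0.
have G2 : G ^+ 2 = quad_i A d i by rewrite /gamma f1 mul1r sqr_sqrtr ?ltW.
have vv : << v, v >> = 1 + << t, t >> by move: f1; rewrite /fval; lra.
rewrite -(ler_pM2l (mulr_gt0 (ltr0n _ 2) G_gt0)).
apply: le_trans (sum_posneg_Dmx_le G _) _.
rewrite !dformZBl !dformZBr dform_t_r dform_c_r dform_t_c (dformC d c t) dform_t_c.
rewrite dform_c_c -G2 vv; lra.
Qed.

End WeightedProjection.

Theorem proposition2 (R : rcfType) (n m : nat) (A : 'M[R]_(n, m)) (u : 'cV[R]_m)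
  (hA1 : unit_columns A) (hA2 : positively_spanning A)
  (d : 'cV[R]_m) (hd : forall j, 0 < d j 0)
  (l : 'cV[R]_m) (Lam : 'M[R]_m) (hl : certified_lb A u l Lam)
  (hf : fval A u d l = 1) (i : 'I_m) :
  let Li := ((col i A)^T *m yvec A u d l) 0 0 - gamma A u d l i in
  let lhat := gamma A u d l i *: (Dmx d *m tvec A u d l)
              - Dmx d *m A^T *m invmx (Bmx A d) *m col i A in
  let ltil := Lam *m negpart lhat + pospart lhat in
  certified_lb_i A u i Li ltil.
Proof.
move=> Li lhat ltil; rewrite /ltil; have B_unit := Bmx_unitmx hd hA2.
have -> : lhat = Dmx d *m (gamma A u d l i *: tvec A u d l
                           - A^T *m invmx (Bmx A d) *m col i A).
  by rewrite /lhat [RHS]mulmxBr -scalemxAr !mulmxA.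
apply: (certified_lb_i_le (certified_lb_combine hl _)).
  exact: mulmx_A_lhat.
by rewrite /Li lerNr opprB; apply: sum_posneg_lhat_le.
Qed.
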